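(* Consider the mass-action system in the concentrations $x_1,\dots,x_6$ with positive reaction rate constants $k_1,\dots,k_6$: \[ \begin{aligned} \dot x_1&=-k_1x_1+k_4x_3x_5, & \dot x_2&=k_1x_1-k_2x_2+k_5x_4x_5, & \dot x_3&=k_2x_2-k_3x_3-k_4x_3x_5,\\ \dot x_4&=k_3x_3-k_5x_4x_5, & \dot x_5&=-k_4x_3x_5-k_5x_4x_5+k_6x_6, & \dot x_6&=k_4x_3x_5+k_5x_4x_5-k_6x_6, \end{aligned} \] with conservation laws $x_1+x_2+x_3+x_4=T_1$, $x_5+x_6=T_2$. Given positive reaction constants $k_1,\dots,k_6$ and positive total conservation constants $T_1,T_2$, there exist positive constants $N_1,N_2,N_3,N_4$ such that for any $\beta_1,\beta_2>0$ satisfying \[ N_1<\beta_1,\quad N_2<\beta_2,\quad \frac{\beta_2}{\beta_1}<N_3,\quad \frac{\beta_1}{\beta_2^2}<N_4, \] after replacing $k_1$ by $\bar k_1=\left(\beta_1\frac{1}{k_1+k_2}-\frac{1}{k_2}\right)^{-1}$ (which is then positive) and $k_6$ by $\bar k_6=\beta_2^{-1}k_6$, without altering $k_2,k_3,k_4,k_5,T_1,T_2$, the system has at least $3$ positive steady states, i.e. at least three points $x\in\mathbb R^6_{>0}$ with all right-hand sides zero, $x_1+x_2+x_3+x_4=T_1$ and $x_5+x_6=T_2$.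
   Context: This is the mass-action system of the hybrid histidine kinase network $X_1\xrightarrow{k_1}X_2\xrightarrow{k_2}X_3\xrightarrow{k_3}X_4$, $X_3+X_5\xrightarrow{k_4}X_1+X_6$, $X_4+X_5\xrightarrow{k_5}X_2+X_6$, $X_6\xrightarrow{k_6}X_5$. *)

From Stdlib Require Import Reals.
Open Scope R_scope.

Record state : Type := mkState { s1 : R; s2 : R; s3 : R; s4 : R; s5 : R; s6 : R }.

Definition f1 (k1 k2 k3 k4 k5 k6 : R) (x : state) : R :=
  - k1 * s1 x + k4 * s3 x * s5 x.
Definition f2 (k1 k2 k3 k4 k5 k6 : R) (x : state) : R :=
  k1 * s1 x - k2 * s2 x + k5 * s4 x * s5 x.
Definition f3 (k1 k2 k3 k4 k5 k6 : R) (x : state) : R :=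
  k2 * s2 x - k3 * s3 x - k4 * s3 x * s5 x.
Definition f4 (k1 k2 k3 k4 k5 k6 : R) (x : state) : R :=
  k3 * s3 x - k5 * s4 x * s5 x.
Definition f5 (k1 k2 k3 k4 k5 k6 : R) (x : state) : R :=
  - k4 * s3 x * s5 x - k5 * s4 x * s5 x + k6 * s6 x.
Definition f6 (k1 k2 k3 k4 k5 k6 : R) (x : state) : R :=
  k4 * s3 x * s5 x + k5 * s4 x * s5 x - k6 * s6 x.

Definition positive_steady_state (k1 k2 k3 k4 k5 k6 T1 T2 : R) (x : state) : Prop :=
  0 < s1 x /\ 0 < s2 x /\ 0 < s3 x /\ 0 < s4 x /\ 0 < s5 x /\ 0 < s6 x /\
  f1 k1 k2 k3 k4 k5 k6 x = 0 /\ f2 k1 k2 k3 k4 k5 k6 x = 0 /\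
  f3 k1 k2 k3 k4 k5 k6 x = 0 /\ f4 k1 k2 k3 k4 k5 k6 x = 0 /\
  f5 k1 k2 k3 k4 k5 k6 x = 0 /\ f6 k1 k2 k3 k4 k5 k6 x = 0 /\
  s1 x + s2 x + s3 x + s4 x = T1 /\ s5 x + s6 x = T2.

Definition at_least_three_pss (k1 k2 k3 k4 k5 k6 T1 T2 : R) : Prop :=
  exists x y z : state,
    x <> y /\ x <> z /\ y <> z /\
    positive_steady_state k1 k2 k3 k4 k5 k6 T1 T2 x /\
    positive_steady_state k1 k2 k3 k4 k5 k6 T1 T2 y /\
    positive_steady_state k1 k2 k3 k4 k5 k6 T1 T2 z.

From Stdlib Require Import Reals Lra Psatz.
Open Scope R_scope.

(* At a positive steady state every concentration is a rational function of
   x5 = z, and the conservation law for x1 + ... + x4 together with f6 = 0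
   leaves the single equation [x5_poly z = 0], a cubic in z that is positive
   at 0 and negative at T2.  The rescaling makes k6 small and the coefficient
   k4 b1 / (k1 + k2) of z^2 in [x5_denom] large; then the cubic is also
   negative at a small y and positive at T2/2, so it has three roots in
   (0, T2), each giving a positive steady state with a different x5. *)

Ltac solve_pos :=
  repeat match goal with
  | |- 0 < _ * _ => apply Rmult_lt_0_compat
  | |- 0 < _ / _ => apply Rdiv_lt_0_compat
  | |- 0 < / _ => apply Rinv_0_lt_compat
  | |- 0 < _ + _ => apply Rplus_lt_0_compat
  | |- 0 < _ ^ _ => apply pow_lt
  end; try assumption; try lra.

Lemma IVT_open (f : R -> R) (x y : R) :
  continuity f -> x < y -> f x * f y < 0 -> exists z, x < z < y /\ f z = 0.
Proof.
  intros Hf Hxy Hsign.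
  destruct (IVT_cor f x y Hf (Rlt_le _ _ Hxy) (Rlt_le _ _ Hsign))
    as (z & [[Hxz | <-] [Hzy | ->]] & Hz).
  - exists z; auto.
  - rewrite Hz, Rmult_0_r in Hsign; lra.
  - rewrite Hz, Rmult_0_l in Hsign; lra.
  - rewrite Hz, Rmult_0_l in Hsign; lra.
Qed.

Lemma three_roots_of_sign_changes (f : R -> R) (u v w : R) :
  continuity f -> 0 < u -> u < v -> v < w ->
  0 < f 0 -> f u < 0 -> 0 < f v -> f w < 0 ->
  exists z1 z2 z3, 0 < z1 < u /\ u < z2 < v /\ v < z3 < w /\
                   f z1 = 0 /\ f z2 = 0 /\ f z3 = 0.
Proof.
  intros Hf Hu Huv Hvw H0 Hu' Hv' Hw'.
  destruct (IVT_open f 0 u) as (z1 & ? & ?); [auto | auto | nra |].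
  destruct (IVT_open f u v) as (z2 & ? & ?); [auto | auto | nra |].
  destruct (IVT_open f v w) as (z3 & ? & ?); [auto | auto | nra |].
  exists z1, z2, z3; tauto.
Qed.

Section Reduction.

Variables k1 k2 k3 k4 k5 k6 T1 T2 : R.
Hypotheses (hk1 : 0 < k1) (hk2 : 0 < k2) (hk3 : 0 < k3) (hk4 : 0 < k4)
  (hk5 : 0 < k5) (hk6 : 0 < k6) (hT1 : 0 < T1) (hT2 : 0 < T2).

Definition x5_denom (z : R) : R :=
  k4 * (/ k1 + / k2) * z ^ 2 + (1 + k3 / k2) * z + k3 / k5.

Definition x5_poly (z : R) : R :=
  k6 * (T2 - z) * x5_denom z - T1 * z * (k3 + k4 * z).

Definition x3_of_x5 (z : R) : R := T1 * z / x5_denom z.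

Definition state_of_x5 (z : R) : state :=
  mkState (k4 * x3_of_x5 z * z / k1) (x3_of_x5 z * (k3 + k4 * z) / k2)
          (x3_of_x5 z) (k3 * x3_of_x5 z / (k5 * z)) z (T2 - z).

Lemma x5_denom_pos (z : R) : 0 <= z -> 0 < x5_denom z.
Proof.
  intros Hz. unfold x5_denom.
  assert (0 <= k4 * (/ k1 + / k2) * z ^ 2).
  { apply Rmult_le_pos; [left; solve_pos | apply pow_le; exact Hz]. }
  assert (0 <= (1 + k3 / k2) * z) by (apply Rmult_le_pos; [left; solve_pos | exact Hz]).
  assert (0 < k3 / k5) by solve_pos.
  lra.
Qed.

Lemma x5_poly_continuous : continuity x5_poly.
Proof. unfold x5_poly, x5_denom. reg. Qed.

Lemma state_of_x5_steady (z : R) :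
  0 < z < T2 -> x5_poly z = 0 ->
  positive_steady_state k1 k2 k3 k4 k5 k6 T1 T2 (state_of_x5 z).
Proof.
  intros [Hz HzT] Hroot.
  assert (Hden := x5_denom_pos z (Rlt_le _ _ Hz)).
  assert (Hx3 : 0 < x3_of_x5 z) by (unfold x3_of_x5; solve_pos).
  (* f5 = 0 and f6 = 0 both reduce to this balance *)
  assert (Hbalance : x3_of_x5 z * (k3 + k4 * z) = k6 * (T2 - z)).
  { apply (Rmult_eq_reg_r (x5_denom z)); [| lra].
    replace (x3_of_x5 z * (k3 + k4 * z) * x5_denom z) with (T1 * z * (k3 + k4 * z))
      by (unfold x3_of_x5; field; lra).
    unfold x5_poly in Hroot; lra. }
  unfold positive_steady_state, f1, f2, f3, f4, f5, f6, state_of_x5; simpl.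
  repeat split; try solve_pos; try (field; lra).
  - transitivity (- (x3_of_x5 z * (k3 + k4 * z)) + k6 * (T2 - z)); [field | ]; lra.
  - transitivity (x3_of_x5 z * (k3 + k4 * z) - k6 * (T2 - z)); [field | ]; lra.
  - transitivity (x3_of_x5 z * x5_denom z / z); [unfold x5_denom; field; lra |].
    unfold x3_of_x5; field; lra.
Qed.

Lemma x5_poly_at_0 : 0 < x5_poly 0.
Proof.
  assert (Hden := x5_denom_pos 0 (Rle_refl 0)).
  assert (0 < k6 * T2 * x5_denom 0) by solve_pos.
  unfold x5_poly. lra.
Qed.

Lemma x5_poly_at_T2 : x5_poly T2 < 0.
Proof.
  assert (0 < T1 * T2 * (k3 + k4 * T2)) by solve_pos.
  unfold x5_poly. lra.
Qed.

Lemma x5_poly_neg (y : R) :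
  0 < y -> k4 * (/ k1 + / k2) * y ^ 2 < k3 / k5 -> (1 + k3 / k2) * y < k3 / k5 ->
  3 * k6 * T2 * (k3 / k5) <= T1 * k3 * y -> x5_poly y < 0.
Proof.
  intros Hy Hquad Hlin Hy_large.
  assert (Hden : x5_denom y < 3 * (k3 / k5)) by (unfold x5_denom; lra).
  assert (Hden_pos := x5_denom_pos y (Rlt_le _ _ Hy)).
  assert (0 < k6 * y * x5_denom y) by solve_pos.
  assert (k6 * T2 * x5_denom y < k6 * T2 * (3 * (k3 / k5)))
    by (apply Rmult_lt_compat_l; solve_pos).
  assert (0 < T1 * y * (k4 * y)) by solve_pos.
  unfold x5_poly. lra.
Qed.

Lemma x5_poly_mid_pos :
  4 * T1 * (k3 + k4 * (T2 / 2)) < k6 * (k4 * (/ k1 + / k2)) * T2 ^ 2 ->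
  0 < x5_poly (T2 / 2).
Proof.
  intros Hmid.
  replace (x5_poly (T2 / 2))
    with (T2 / 2 * (k6 * x5_denom (T2 / 2) - T1 * (k3 + k4 * (T2 / 2))))
    by (unfold x5_poly; field).
  apply Rmult_lt_0_compat; [lra |].
  assert (0 < k6 * ((1 + k3 / k2) * (T2 / 2) + k3 / k5)) by solve_pos.
  unfold x5_denom. lra.
Qed.

Lemma three_pss_criterion (y : R) :
  0 < y < T2 / 2 ->
  k4 * (/ k1 + / k2) * y ^ 2 < k3 / k5 -> (1 + k3 / k2) * y < k3 / k5 ->
  3 * k6 * T2 * (k3 / k5) <= T1 * k3 * y ->
  4 * T1 * (k3 + k4 * (T2 / 2)) < k6 * (k4 * (/ k1 + / k2)) * T2 ^ 2 ->
  at_least_three_pss k1 k2 k3 k4 k5 k6 T1 T2.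
Proof.
  intros [Hy HyT] Hquad Hlin Hy_large Hmid.
  destruct (three_roots_of_sign_changes x5_poly y (T2 / 2) T2)
    as (z1 & z2 & z3 & Hz1 & Hz2 & Hz3 & Hr1 & Hr2 & Hr3);
    auto using x5_poly_continuous, x5_poly_at_0, x5_poly_at_T2, x5_poly_neg,
               x5_poly_mid_pos; try lra.
  exists (state_of_x5 z1), (state_of_x5 z2), (state_of_x5 z3).
  assert (Hdistinct : forall u v, u <> v -> state_of_x5 u <> state_of_x5 v).
  { intros u v Huv Heq. apply Huv. exact (f_equal s5 Heq). }
  refine (conj _ (conj _ (conj _ (conj _ (conj _ _))))).
  1-3: apply Hdistinct; lra.
  all: apply state_of_x5_steady; [split; lra | assumption].
Qed.

End Reduction.

Section Rescaling.

Variables k1 k2 k3 k4 k5 k6 T1 T2 : R.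
Hypotheses (hk1 : 0 < k1) (hk2 : 0 < k2) (hk3 : 0 < k3) (hk4 : 0 < k4)
  (hk5 : 0 < k5) (hk6 : 0 < k6) (hT1 : 0 < T1) (hT2 : 0 < T2).

(* Each threshold makes one hypothesis of [three_pss_criterion] hold. *)
Definition N1 : R := (k1 + k2) / k2.
Definition N2 : R :=
  Rmax (6 * k6 / (k5 * T1)) (3 * (1 + k3 / k2) * k6 * T2 / (T1 * k3)).
Definition N3 : R := k4 * k6 * T2 ^ 2 / (4 * T1 * (k3 + k4 * (T2 / 2)) * (k1 + k2)).
Definition N4 : R := (k1 + k2) * k3 * k5 * T1 ^ 2 / (9 * k4 * k6 ^ 2 * T2 ^ 2).

Lemma N1_pos : 0 < N1.
Proof. unfold N1; solve_pos. Qed.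

Lemma N2_pos : 0 < N2.
Proof. eapply Rlt_le_trans; [| apply Rmax_l]; solve_pos. Qed.

Lemma N3_pos : 0 < N3.
Proof. unfold N3; solve_pos. Qed.

Lemma N4_pos : 0 < N4.
Proof. unfold N4; solve_pos. Qed.

Variables b1 b2 : R.
Hypotheses (hb1 : 0 < b1) (hb2 : 0 < b2).

Lemma rescaled_k1_inv_pos :
  N1 < b1 -> 0 < b1 * (1 / (k1 + k2)) - 1 / k2.
Proof.
  intros HN1.
  replace (b1 * (1 / (k1 + k2)) - 1 / k2) with ((b1 - N1) / (k1 + k2))
    by (unfold N1; field; lra).
  solve_pos.
Qed.

Lemma rescaled_k1_pos : N1 < b1 -> 0 < / (b1 * (1 / (k1 + k2)) - 1 / k2).
Proof. intros HN1. apply Rinv_0_lt_compat, rescaled_k1_inv_pos, HN1. Qed.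

Lemma rescaled_quad_coef :
  k4 * (/ / (b1 * (1 / (k1 + k2)) - 1 / k2) + / k2) = k4 * b1 / (k1 + k2).
Proof. rewrite Rinv_inv. field; lra. Qed.

Lemma rescaled_three_pss :
  N1 < b1 -> N2 < b2 -> b2 / b1 < N3 -> b1 / b2 ^ 2 < N4 ->
  at_least_three_pss (/ (b1 * (1 / (k1 + k2)) - 1 / k2)) k2 k3 k4 k5
                     (/ b2 * k6) T1 T2.
Proof.
  intros HN1 HN2 HN3 HN4.
  apply Rmax_Rlt in HN2 as [HN2_half HN2_lin].
  assert (Hmid_pos : 0 < k3 + k4 * (T2 / 2)) by solve_pos.
  (* y is chosen to make the hypothesis [3 k6 T2 (k3/k5) <= T1 k3 y] an equality *)
  set (y := 3 * (/ b2 * k6) * T2 / (T1 * k5)).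
  apply three_pss_criterion with (y := y);
    try solve [apply rescaled_k1_pos; auto | solve_pos];
    rewrite ?rescaled_quad_coef.
  - split; [unfold y; solve_pos |].
    replace y with (6 * k6 / (k5 * T1) * (T2 / (2 * b2))) by (unfold y; field; lra).
    replace (T2 / 2) with (b2 * (T2 / (2 * b2))) by (field; lra).
    apply Rmult_lt_compat_r; solve_pos.
  - replace (k4 * b1 / (k1 + k2) * y ^ 2)
      with (b1 / b2 ^ 2 * (9 * k4 * k6 ^ 2 * T2 ^ 2 / ((k1 + k2) * T1 ^ 2 * k5 ^ 2)))
      by (unfold y; field; lra).
    replace (k3 / k5)
      with (N4 * (9 * k4 * k6 ^ 2 * T2 ^ 2 / ((k1 + k2) * T1 ^ 2 * k5 ^ 2)))
      by (unfold N4; field; lra).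
    apply Rmult_lt_compat_r; solve_pos.
  - replace ((1 + k3 / k2) * y)
      with (3 * (1 + k3 / k2) * k6 * T2 / (T1 * k3) * (k3 / (k5 * b2)))
      by (unfold y; field; lra).
    replace (k3 / k5) with (b2 * (k3 / (k5 * b2))) by (field; lra).
    apply Rmult_lt_compat_r; solve_pos.
  - right. unfold y. field. lra.
  - replace (4 * T1 * (k3 + k4 * (T2 / 2)))
      with (b2 / b1 * (4 * T1 * (k3 + k4 * (T2 / 2)) * b1 / b2)) by (field; lra).
    replace (/ b2 * k6 * (k4 * b1 / (k1 + k2)) * T2 ^ 2)
      with (N3 * (4 * T1 * (k3 + k4 * (T2 / 2)) * b1 / b2)) by (unfold N3; field; lra).
    apply Rmult_lt_compat_r; solve_pos.
Qed.

End Rescaling.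

Theorem proposition3p5 :
  forall k1 k2 k3 k4 k5 k6 T1 T2 : R,
    0 < k1 -> 0 < k2 -> 0 < k3 -> 0 < k4 -> 0 < k5 -> 0 < k6 ->
    0 < T1 -> 0 < T2 ->
    exists N1 N2 N3 N4 : R,
      0 < N1 /\ 0 < N2 /\ 0 < N3 /\ 0 < N4 /\
      forall b1 b2 : R,
        0 < b1 -> 0 < b2 ->
        N1 < b1 -> N2 < b2 -> b2 / b1 < N3 -> b1 / (b2 ^ 2) < N4 ->
        0 < / (b1 * (1 / (k1 + k2)) - 1 / k2) /\
        at_least_three_pss (/ (b1 * (1 / (k1 + k2)) - 1 / k2)) k2 k3 k4 k5
                           (/ b2 * k6) T1 T2.
Proof.
  intros k1 k2 k3 k4 k5 k6 T1 T2 hk1 hk2 hk3 hk4 hk5 hk6 hT1 hT2.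
  exists (N1 k1 k2), (N2 k2 k3 k5 k6 T1 T2), (N3 k1 k2 k3 k4 k6 T1 T2),
    (N4 k1 k2 k3 k4 k5 k6 T1 T2).
  refine (conj _ (conj _ (conj _ (conj _ _)))).
  1-4: auto using N1_pos, N2_pos, N3_pos, N4_pos.
  intros b1 b2 hb1 hb2 HN1 HN2 HN3 HN4.
  split.
  - apply rescaled_k1_pos; auto.
  - apply rescaled_three_pss; auto.
Qed.
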